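(* Let $\alpha$ be irrational and $n\ge1$. Then $$D^*(\beta_\alpha)\le \max_{s\in[n]}d^*(\mathcal{A}_s(\alpha))+d^*(\mathcal{A}_n(\alpha))\le 2\max_{s\in[n]}d^*(\mathcal{A}_s(\alpha)).$$
   Context: $[n]=\{1,\dots,n\}$ and $\{x\}$ denotes the fractional part of $x$. For irrational $\alpha$, the Sós permutation $\beta_\alpha$ of $[n]$ is defined by $\beta_\alpha(t)=|\{s\in[n]:\{\alpha s\}\le\{\alpha t\}\}|$ (so $\beta_\alpha(s)<\beta_\alpha(t)$ iff $\{\alpha s\}<\{\alpha t\}$). $D^*(\beta_\alpha)=\max_{s,t\in[n]}\bigl|\,|\beta_\alpha([s])\cap[t]|-st/n\,\bigr|$. For $s\ge1$, $\mathcal{A}_s(\alpha)=\{\{\alpha x\}:x\in[s]\}$, and for a finite set $A\subset[0,1]$, $d^*(A)=\sup_{0\le x\le1}\bigl|\,|A\cap[0,x]|-x|A|\,\bigr|$. *)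

From HB Require Import structures.
From mathcomp Require Import all_boot all_order all_algebra.
From mathcomp Require Import all_classical all_reals.
Set Implicit Arguments. Unset Strict Implicit. Unset Printing Implicit Defensive.
Import Order.TTheory GRing.Theory Num.Theory.
Local Open Scope ring_scope.
Local Open Scope classical_set_scope.

Definition frac {R : realType} (x : R) : R := x - (Num.floor x)%:~R.

Definition sos_perm {R : realType} (a : R) (n t : nat) : nat :=
  count (fun s : nat => frac (a * s%:R) <= frac (a * t%:R)) (iota 1 n).

(* |beta([s]) cap [t]| = #{u in [s] : beta(u) <= t} *)
Definition sos_count {R : realType} (a : R) (n s t : nat) : nat :=
  count (fun u : nat => (sos_perm a n u <= t)%N) (iota 1 s).

Definition Dstar {R : realType} (a : R) (n : nat) : R :=
  \big[Num.max/0]_(s <- iota 1 n) \big[Num.max/0]_(t <- iota 1 n)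
     `| (sos_count a n s t)%:R - (s * t)%:R / n%:R |.

Definition Aset {R : realType} (a : R) (s : nat) : seq R :=
  undup [seq frac (a * x%:R) | x <- iota 1 s].

Definition dstar {R : realType} (A : seq R) : R :=
  sup [set y : R | exists2 x : R, 0 <= x <= 1 &
        y = `| (count (fun a => (0 <= a) && (a <= x)) A)%:R - x * (size A)%:R |].

Definition maxdstar {R : realType} (a : R) (n : nat) : R :=
  \big[Num.max/0]_(s <- iota 1 n) dstar (Aset a s).

From Pilot Require Import Defs.
From HB Require Import structures.
From mathcomp Require Import all_boot all_order all_algebra.
From mathcomp Require Import all_classical all_reals.
From mathcomp Require Import ring lra.
Import Order.TTheory GRing.Theory Num.Theory.
Local Open Scope ring_scope.

(* Irrationality makes the points {a u} distinct, so the Sos permutation is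
   the rank function of these points.  Given s, t in [n], let v be the index
   of rank t and x = {a v}.  Then |beta([s]) cap [t]| = |A_s cap [0,x]| and
   t = |A_n cap [0,x]|; these counts are within d*(A_s) of x s and within
   d*(A_n) of x n, and |beta([s]) cap [t]| - s t / n is the first error plus
   s/n times the second one. *)

Lemma sub_count_ltn (T : eqType) (p q : pred T) (s : seq T) x :
  subpred p q -> x \in s -> q x -> ~~ p x -> (count p s < count q s)%N.
Proof.
move=> pq; elim: s => // y s IH; rewrite in_cons /= => /orP [/eqP ->|xs] qx px.
  by rewrite qx (negbTE px) add0n add1n ltnS sub_count.
have := IH xs qx px; case: (p y) (pq y) => [->//|_]; rewrite add0n => h.
exact: leq_trans h (leq_addl _ _).
Qed.

Lemma ler_norm_ratio_approx (R : realFieldType) (c s t N x d1 d2 : R) :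
  0 < N -> 0 <= s <= N ->
  `|c - x * s| <= d1 -> `|t - x * N| <= d2 -> `|c - s * t / N| <= d1 + d2.
Proof.
move=> N0 /andP [s0 sN] h1 h2.
have sN0 : 0 <= s / N by rewrite divr_ge0 // ltW.
have sN1 : s / N <= 1 by rewrite ler_pdivrMr // mul1r.
have -> : c - s * t / N = (c - x * s) + s / N * (x * N - t).
  by field; rewrite lt0r_neq0.
apply: le_trans (ler_normD _ _) _; apply: lerD => //.
rewrite normrM (ger0_norm sN0) distrC.
apply: le_trans (ler_wpM2l sN0 h2) _.
by apply: ler_piMl => //; apply: le_trans h2.
Qed.

Section FractionalPart.
Variable R : realType.

Lemma frac_ge0 (x : R) : 0 <= Defs.frac x.
Proof. by rewrite /Defs.frac subr_ge0 floor_le. Qed.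

Lemma frac_lt1 (x : R) : Defs.frac x < 1.
Proof. by rewrite /Defs.frac ltrBlDl; have := floorD1_gt x; rewrite intrD addrC. Qed.

Lemma frac_mulrn_inj (a : R) (u v : nat) : irrational a ->
  Defs.frac (a * u%:R) = Defs.frac (a * v%:R) -> u = v.
Proof.
move=> ia; wlog vu : u v / (v < u)%N.
  move=> H E; case: (ltngtP v u) => [vu|uv|->//]; first exact: H.
  exact/esym/H.
rewrite /Defs.frac; set fu := Num.floor _; set fv := Num.floor _.
move=> /eqP; rewrite subr_eq => /eqP E; exfalso; apply: ia; apply/rationalP.
exists (fu - fv), (u - v)%N.
have uv0 : (u - v)%:R != 0 :> R by rewrite pnatr_eq0 subn_eq0 -ltnNge.
by apply: (mulIf uv0); rewrite mulfVK // natrB 1?ltnW // intrB mulrBr E; ring.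
Qed.

End FractionalPart.

Section Discrepancy.
Variable R : realType.

Lemma dstar_ub (A : seq R) x : 0 <= x <= 1 ->
  `| (count (fun y => (0 <= y) && (y <= x)) A)%:R - x * (size A)%:R | <= dstar A.
Proof.
move=> x01; apply: sup_upper_bound; last by exists x.
split; first by eexists; exists x.
exists ((size A)%:R *+ 2) => _ [z /andP [z0 z1] ->].
set c := count _ A; have cA : c%:R <= (size A)%:R :> R by rewrite ler_nat count_size.
have c0 : 0 <= c%:R :> R by [].
by rewrite ler_norml mulr2n; apply/andP; split; nra.
Qed.

Lemma dstar_ge0 (A : seq R) : 0 <= dstar A.
Proof. by apply: le_trans (@dstar_ub A 0 _); rewrite ?lexx ?ler01. Qed.

End Discrepancy.

Section SosPermutation.
Variables (R : realType) (a : R) (n : nat).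
Hypothesis ia : irrational a.
Local Notation fr u := (Defs.frac (a * u%:R)).
Local Notation beta := (sos_perm a n).

Lemma sos_perm_leE u v : u \in iota 1 n -> v \in iota 1 n ->
  (beta u <= beta v)%N = (fr u <= fr v).
Proof.
move=> un vn; case: (lerP (fr u) (fr v)) => h.
  by apply: sub_count => w /= /le_trans; apply.
apply/negbTE; rewrite -ltnNge; apply: (@sub_count_ltn _ _ _ _ u) => //=.
- by move=> w /= /le_trans; apply; apply: ltW.
- by rewrite -ltNge.
Qed.

Lemma sos_perm_inj : {in iota 1 n &, injective beta}.
Proof.
move=> u v un vn e; apply: (@frac_mulrn_inj R a _ _ ia); apply/eqP.
by rewrite eq_le -!sos_perm_leE // e leqnn.
Qed.

Lemma sos_perm_range v : v \in iota 1 n -> beta v \in iota 1 n.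
Proof.
move=> vn; rewrite mem_iota add1n ltnS -has_count -[X in (_ <= X)%N](size_iota 1 n).
by rewrite count_size andbT; apply/hasP; exists v.
Qed.

Lemma sos_perm_surj t : t \in iota 1 n -> exists2 v, v \in iota 1 n & beta v = t.
Proof.
have [_ <-] : (size (map beta (iota 1 n)) = size (iota 1 n)) *
              (map beta (iota 1 n) =i iota 1 n).
  apply: uniq_min_size; rewrite ?size_map //.
    by rewrite map_inj_in_uniq ?iota_uniq //; apply: sos_perm_inj.
  by move=> _ /mapP [v vn ->]; apply: sos_perm_range.
by move/mapP=> [v vn ->]; exists v.
Qed.

Lemma sos_countE s v : (s <= n)%N -> v \in iota 1 n ->
  sos_count a n s (beta v) = count (fun u => fr u <= fr v) (iota 1 s).
Proof.
move=> sn vn; apply: eq_in_count => u; rewrite mem_iota => /andP [u1 us].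
by apply: sos_perm_leE; rewrite // mem_iota u1 (leq_trans us) ?leq_add2l.
Qed.

Lemma Aset_uniq s : uniq [seq fr u | u <- iota 1 s].
Proof. by rewrite map_inj_uniq ?iota_uniq // => u v; apply: frac_mulrn_inj. Qed.

Lemma Aset_discrepancy s x : 0 <= x <= 1 ->
  `| (count (fun u => fr u <= x) (iota 1 s))%:R - x * s%:R | <= dstar (Aset a s).
Proof.
move=> x01; have := @dstar_ub R (Aset a s) x x01.
rewrite /Aset undup_id ?Aset_uniq // size_map size_iota count_map.
by under eq_count => u do rewrite /= frac_ge0.
Qed.

Lemma dstar_le_maxdstar s : s \in iota 1 n -> dstar (Aset a s) <= maxdstar a n.
Proof. by move=> sn; exact: (@le_bigmax_seq _ R _ _ 0 s xpredT _ sn). Qed.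

Lemma Dstar_le_maxdstar_add : Dstar a n <= maxdstar a n + dstar (Aset a n).
Proof.
have sum0 : 0 <= maxdstar a n + dstar (Aset a n).
  by rewrite addr_ge0 ?dstar_ge0 ?bigmax_ge_id.
rewrite /Dstar big_seq; apply: bigmax_le => // s sn.
rewrite big_seq; apply: bigmax_le => // t tn.
have [v vn <-] := sos_perm_surj t tn.
have [s1 sle] : (1 <= s)%N /\ (s <= n)%N.
  by move: sn; rewrite mem_iota add1n ltnS => /andP.
have x01 : 0 <= fr v <= 1 by rewrite frac_ge0 ltW ?frac_lt1.
rewrite sos_countE // natrM; apply: (@ler_norm_ratio_approx _ _ _ _ _ (fr v)).
- by rewrite ltr0n (leq_trans s1).
- by rewrite ler0n ler_nat.
- apply: le_trans (Aset_discrepancy s _ x01) _.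
  exact: dstar_le_maxdstar.
- exact: Aset_discrepancy.
Qed.

End SosPermutation.

Theorem mainTheorem11 (R : realType) (a : R) (n : nat) :
  @irrational R a -> (1 <= n)%N ->
  Dstar a n <= maxdstar a n + dstar (Aset a n) /\
  maxdstar a n + dstar (Aset a n) <= 2 * maxdstar a n.
Proof.
move=> ia n1; split; first exact: Dstar_le_maxdstar_add.
have nn : n \in iota 1 n by rewrite mem_iota add1n ltnS n1 leqnn.
have dAn : dstar (Aset a n) <= maxdstar a n by apply: dstar_le_maxdstar.
by rewrite mulr2n mulrDl mul1r lerD2l.
Qed.
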